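(* The graph $G_p$ is isomorphic to the Cayley graph $\mathrm{Cay}(S_4,\mathcal{C})$, where $\mathcal{C}$ is the set of elements of order exactly $2$ in the symmetric group $S_4$.
   Context: For a group $G$ and an inverse-closed subset $\mathcal{C}\subseteq G$ not containing the identity, the Cayley graph $\mathrm{Cay}(G,\mathcal{C})$ has vertex set $G$, with $g$ and $h$ adjacent iff $hg^{-1}\in\mathcal{C}$. $G_p$ is the orthogonality graph of the following 24 vectors in $\mathbb{R}^4$ (vertices are the vectors; two are adjacent iff their standard inner product is $0$): $(1,0,0,0),(0,1,0,0),(0,0,1,0),(0,0,0,1)$; $(0,1,1,0),(1,0,0,-1),(1,0,0,1),(0,1,-1,0)$; $(1,1,1,1),(1,-1,1,-1),(1,-1,-1,1),(1,1,-1,-1)$; $(1,-1,0,0),(1,1,0,0),(0,0,1,1),(0,0,1,-1)$; $(-1,1,1,1),(1,1,1,-1),(1,-1,1,1),(1,1,-1,1)$; $(1,0,1,0),(0,1,0,1),(1,0,-1,0),(0,1,0,-1)$. *)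

From HB Require Import structures.
From mathcomp Require Import all_boot all_order all_algebra all_fingroup.
Set Implicit Arguments. Unset Strict Implicit. Unset Printing Implicit Defensive.
Import GRing.Theory Num.Theory.
Local Open Scope ring_scope.

(* The 24 vectors of R^4 spanning G_p (all entries are integers, so we
   store them as integer 4-tuples; the standard inner product is computed
   in int, which agrees with the real inner product). *)
Definition Gp_vecs : seq (int * int * int * int) :=
  [:: (1,0,0,0); (0,1,0,0); (0,0,1,0); (0,0,0,1);
      (0,1,1,0); (1,0,0,-1); (1,0,0,1); (0,1,-1,0);
      (1,1,1,1); (1,-1,1,-1); (1,-1,-1,1); (1,1,-1,-1);
      (1,-1,0,0); (1,1,0,0); (0,0,1,1); (0,0,1,-1);
      (-1,1,1,1); (1,1,1,-1); (1,-1,1,1); (1,1,-1,1);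
      (1,0,1,0); (0,1,0,1); (1,0,-1,0); (0,1,0,-1)]%R.

Definition Gp_vec (i : 'I_24) : int * int * int * int :=
  nth (0,0,0,0) Gp_vecs i.

Definition dot4 (u v : int * int * int * int) : int :=
  let: (a1, a2, a3, a4) := u in let: (b1, b2, b3, b4) := v in
  a1 * b1 + a2 * b2 + a3 * b3 + a4 * b4.

Definition Gp_adj (i j : 'I_24) : bool := dot4 (Gp_vec i) (Gp_vec j) == 0.

Definition cayley_adj (gT : finGroupType) (C : {set gT}) (g h : gT) : bool :=
  (h * g^-1)%g \in C.

Definition S4_invol : {set 'S_4} := [set x : 'S_4 | #[x]%g == 2%N].

Definition graph_iso (V W : finType) (eV : rel V) (eW : rel W) (f : V -> W) :=
  bijective f /\ forall x y, eV x y = eW (f x) (f y).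

From mathcomp Require Import all_boot all_order all_algebra all_fingroup.
From mathcomp Require Import cyclic.

Set Implicit Arguments.
Unset Strict Implicit.
Unset Printing Implicit Defensive.

(* Label each of the 24 vectors by a permutation of 'I_4 so that two vectors
   are orthogonal exactly when their labels differ by a nontrivial involution.
   Elements of order 2 are the nontrivial square roots of 1, and for
   permutations g, h the condition (h g^-1)^2 = 1 is a pointwise property of g
   and h, so with labels given by their lists of images both adjacency
   relations become computable on natural numbers and can be compared. *)

Lemma order_eq2 (gT : finGroupType) (x : gT) :
  (#[x]%g == 2) = (x != 1)%g && (x ^+ 2 == 1)%g.
Proof.
rewrite -order_dvdn -order_eq1.
apply/eqP/andP => [-> // | [ne1 dvd2]].
exact/(prime_nt_dvdP _ ne1).
Qed.

Lemma perm_mulV_sqr_eq1 (T : finType) (g h : {perm T}) :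
  ((h * g^-1) ^+ 2 == 1)%g = [forall k, forall m, (g m == h k) ==> (g k == h m)].
Proof.
rewrite expgS expg1; apply/eqP/forallP => [sq1 k|swap].
  apply/forallP => m; apply/implyP => /eqP gm_hk.
  have := congr1 (fun p : {perm T} => p k) sq1.
  by rewrite !permM perm1 -gm_hk permK => <-; rewrite permKV.
apply/permP => k; rewrite !permM perm1.
have /implyP := forallP (swap k) (g^-1%g (h k)).
by rewrite permKV eqxx => /(_ isT)/eqP <-; rewrite permK.
Qed.

Lemma perm_mulV_order2 (T : finType) (g h : {perm T}) :
  (#[h * g^-1]%g == 2) =
  (g != h) && [forall k, forall m, (g m == h k) ==> (g k == h m)].
Proof. by rewrite order_eq2 -eq_mulgV1 perm_mulV_sqr_eq1 eq_sym. Qed.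

Lemma forall_ord_iota n (P : pred nat) : [forall k : 'I_n, P k] = all P (iota 0 n).
Proof.
rewrite -val_enum_ord all_map.
by apply/forallP/allP => [Pk k _ | Pk k]; [exact: Pk | apply: Pk; rewrite mem_enum].
Qed.

Section PermOfSeq.

Variable n : nat.

Definition seq_fun (s : seq nat) (k : 'I_n) : 'I_n := insubd k (nth 0 s k).

Lemma seq_funE s (k : 'I_n) : perm_eq s (iota 0 n) -> val (seq_fun s k) = nth 0 s k.
Proof.
move=> s_perm; rewrite val_insubd.
have s_size : size s = n by rewrite (perm_size s_perm) size_iota.
have : nth 0 s k \in iota 0 n by rewrite -(perm_mem s_perm) mem_nth // s_size.
by rewrite mem_iota => /andP[_ ->].
Qed.

Lemma seq_fun_inj s : perm_eq s (iota 0 n) -> injective (seq_fun s).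
Proof.
move=> s_perm i j /(congr1 val); rewrite !seq_funE // => /eqP.
have s_size : size s = n by rewrite (perm_size s_perm) size_iota.
rewrite nth_uniq ?s_size // ?(perm_uniq s_perm) ?iota_uniq //.
by move/eqP/val_inj.
Qed.

Definition perm_of_seq s (s_perm : perm_eq s (iota 0 n)) : 'S_n :=
  perm (seq_fun_inj s_perm).

Lemma perm_of_seqE s (s_perm : perm_eq s (iota 0 n)) k :
  val (perm_of_seq s_perm k) = nth 0 s k.
Proof. by rewrite permE seq_funE. Qed.

Lemma eq_perm_of_seq s t (s_perm : perm_eq s (iota 0 n)) (t_perm : perm_eq t (iota 0 n)) :
  (perm_of_seq s_perm == perm_of_seq t_perm) = (s == t).
Proof.
have size_n u : perm_eq u (iota 0 n) -> size u = n.
  by move=> u_perm; rewrite (perm_size u_perm) size_iota.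
apply/eqP/eqP => st.
  apply: (@eq_from_nth _ 0) => [|k]; first by rewrite !size_n.
  rewrite size_n // => k_lt_n.
  by rewrite -[k]/(val (Ordinal k_lt_n)) -!perm_of_seqE st.
by apply/permP => k; apply/val_inj; rewrite !perm_of_seqE st.
Qed.

End PermOfSeq.

Definition seq_invol_adj n (s t : seq nat) : bool :=
  (s != t) && all (fun k => all (fun m =>
    (nth 0 s m == nth 0 t k) ==> (nth 0 s k == nth 0 t m)) (iota 0 n)) (iota 0 n).

Lemma perm_of_seq_mulV_order2 n s t
    (s_perm : perm_eq s (iota 0 n)) (t_perm : perm_eq t (iota 0 n)) :
  (#[perm_of_seq t_perm * (perm_of_seq s_perm)^-1]%g == 2) = seq_invol_adj n s t.
Proof.
rewrite perm_mulV_order2 eq_perm_of_seq; congr (_ && _).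
under eq_forallb => k.
  under eq_forallb => m do rewrite -!(inj_eq val_inj) !perm_of_seqE.
  rewrite (forall_ord_iota _ (fun m =>
    (nth 0 s m == nth 0 t k) ==> (nth 0 s k == nth 0 t m))).
over.
exact: (forall_ord_iota _ (fun k => all (fun m =>
  (nth 0 s m == nth 0 t k) ==> (nth 0 s k == nth 0 t m)) (iota 0 n))).
Qed.

(* The six orthogonal bases formed by consecutive quadruples of Gp_vecs are
   labelled by the six cosets of the Klein four-group. *)
Definition Gp_label_table : seq (seq nat) :=
  [:: [:: 0;1;2;3]; [:: 1;0;3;2]; [:: 2;3;0;1]; [:: 3;2;1;0];
      [:: 0;2;1;3]; [:: 1;3;0;2]; [:: 2;0;3;1]; [:: 3;1;2;0];
      [:: 1;3;2;0]; [:: 0;2;3;1]; [:: 3;1;0;2]; [:: 2;0;1;3];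
      [:: 2;3;1;0]; [:: 3;2;0;1]; [:: 0;1;3;2]; [:: 1;0;2;3];
      [:: 3;0;2;1]; [:: 2;1;3;0]; [:: 1;2;0;3]; [:: 0;3;1;2];
      [:: 3;0;1;2]; [:: 2;1;0;3]; [:: 1;2;3;0]; [:: 0;3;2;1]].

Definition Gp_label_row (x : 'I_24) : seq nat := nth [::] Gp_label_table x.

Lemma Gp_label_table_uniq : uniq Gp_label_table.
Proof. by vm_compute. Qed.

Lemma size_Gp_label_table : size Gp_label_table = 24.
Proof. by []. Qed.

Lemma Gp_label_row_perm (x : 'I_24) : perm_eq (Gp_label_row x) (iota 0 4).
Proof.
have /allP rows_perm : all (perm_eq^~ (iota 0 4)) Gp_label_table by vm_compute.
by apply: rows_perm; rewrite mem_nth // size_Gp_label_table.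
Qed.

Definition Gp_label (x : 'I_24) : 'S_4 := perm_of_seq (Gp_label_row_perm x).

Lemma Gp_label_inj : injective Gp_label.
Proof.
move=> x y /eqP; rewrite eq_perm_of_seq /Gp_label_row => /eqP.
move/eqP; rewrite nth_uniq ?size_Gp_label_table ?Gp_label_table_uniq //.
by move/eqP/val_inj.
Qed.

Lemma Gp_adj_labelE (x y : 'I_24) :
  Gp_adj x y = seq_invol_adj 4 (Gp_label_row x) (Gp_label_row y).
Proof.
have /allP/(_ x) : all (fun i => all (fun j =>
    (dot4 (nth (0, 0, 0, 0)%R Gp_vecs i) (nth (0, 0, 0, 0)%R Gp_vecs j) == 0%R)
    == seq_invol_adj 4 (nth [::] Gp_label_table i) (nth [::] Gp_label_table j))
    (iota 0 24)) (iota 0 24) by vm_compute.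
rewrite mem_iota ltn_ord => /(_ isT)/allP/(_ y).
by rewrite mem_iota ltn_ord => /(_ isT)/eqP.
Qed.

Theorem mainTheorem2 :
  exists f : 'I_24 -> 'S_4,
    graph_iso Gp_adj (cayley_adj S4_invol) f.
Proof.
exists Gp_label; split.
  by apply: (inj_card_bij Gp_label_inj); rewrite card_Sn !card_ord.
move=> x y; rewrite Gp_adj_labelE /cayley_adj inE.
by rewrite perm_of_seq_mulV_order2.
Qed.
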